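(* Let $n>1$ and let $a_1,\dots,a_n$ be regular closed subsets of $\mathbb{R}^2$ such that $\mathrm{int}(a_i\cup\dots\cup a_n)$ is connected for each $1\le i\le n$, $a_i\cdot a_j=\emptyset$ for all $1\le i<j\le n$, and $a_i\cap a_j=\emptyset$ for all $1\le i<j\le n$ with $j-i>1$. Then every point $p_1\in\mathrm{int}(a_1)$ can be connected to every point $p_n\in\mathrm{int}(a_n)$ by a Jordan arc $\alpha=\alpha_1\cdots\alpha_{n-1}$ such that, for all $1\le i<n$, $\alpha_i$ is a non-degenerate Jordan arc in $\mathrm{int}(a_i\cup a_{i+1})$ starting at a point $p_i\in\mathrm{int}(a_i)$.
   Context: $a\cdot b$ denotes $\overline{\mathrm{int}(a\cap b)}$. A Jordan arc is a continuous injective map $[0,1]\to\mathbb{R}^2$ (non-degenerate) or a constant map (degenerate), identified with its image. $\alpha=\alpha_1\cdots\alpha_{n-1}$ denotes a Jordan arc from $p_1$ to $p_n$ that is the concatenation of the arcs $\alpha_1,\dots,\alpha_{n-1}$ in order, each $\alpha_i$ ending where $\alpha_{i+1}$ begins. *)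

(* The plane R^2 is modelled as R * R with the product
   topology, for an arbitrary R : realType (a complete archimedean ordered field,
   i.e. the reals). *)
From HB Require Import structures.
From mathcomp Require Import all_boot all_order all_algebra.
From mathcomp Require Import all_classical all_reals all_analysis.
Set Implicit Arguments. Unset Strict Implicit. Unset Printing Implicit Defensive.
Import Order.TTheory GRing.Theory Num.Theory.
Import numFieldNormedType.Exports.
Local Open Scope classical_set_scope.
Local Open Scope ring_scope.

Definition regular_closed {T : topologicalType} (a : set T) : Prop :=
  closure (a°) = a.

Definition rdot {T : topologicalType} (a b : set T) : set T :=
  closure ((a `&` b)°).

Definition jordan_param {R : realType} (g : R -> R * R) (s t : R) : Prop :=
  {within `[s, t]%classic, continuous g} /\ {in `[s, t]%classic &, injective g}.

Definition arc_image {R : realType} (g : R -> R * R) (s t : R) : set (R * R) :=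
  g @` `[s, t]%classic.

Definition union_from {T : Type} (a : nat -> set T) (i n : nat) : set T :=
  [set x | exists2 j, (i <= j <= n)%N & a j x].

From HB Require Import structures.
From mathcomp Require Import all_boot all_order all_algebra.
From mathcomp Require Import all_classical all_reals all_analysis.
From mathcomp Require Import ring lra zify.
Import Order.TTheory GRing.Theory Num.Theory.
Import numFieldNormedType.Exports.
Set Implicit Arguments. Unset Strict Implicit. Unset Printing Implicit Defensive.
Local Open Scope classical_set_scope.
Local Open Scope ring_scope.

(* Inside the open set [link i = int (a_i ∪ a_(i+1))], the points reachable from
   [q] by polygonal paths form an open set; started in [int a_i], this set either
   meets [int a_(i+1)] or is also closed in the connected [int (a_i ∪ ... ∪ a_n)]
   and contained in [int a_i], which is absurd.  The arc is then built piece by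
   piece: each new polygonal piece is grafted onto the previous one at its last
   point of entry, which lies in [link (i-1) ∩ link i ⊆ int a_i], and made simple
   by loop removal.  Pieces two or more apart lie in disjoint links, so the
   concatenation is a simple polygonal path, parametrised as a Jordan arc. *)

Section Polyline.
Variable R : realType.
Implicit Types (u v w p y z : R * R) (s : seq (R * R)) (l m : R) (K : set (R * R)).

Definition lerp u v l : R * R := (u.1 + l * (v.1 - u.1), u.2 + l * (v.2 - u.2)).

Definition segment u v : set (R * R) :=
  [set w | exists2 l, 0 <= l <= 1 & w = lerp u v l].

Fixpoint polyline p s : set (R * R) :=
  if s is v :: s' then segment p v `|` polyline v s' else [set p].

Fixpoint simple_polyline p s : Prop :=
  if s is v :: s' then
    [/\ p <> v, simple_polyline v s' & segment p v `&` polyline v s' `<=` [set v]]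
  else True.

Lemma lerp0 u v : lerp u v 0 = u.
Proof. by case: u => a b; rewrite /lerp !mul0r !addr0. Qed.

Lemma lerp1 u v : lerp u v 1 = v.
Proof. by case: u v => a b [c d]; rewrite /lerp /=; congr pair; ring. Qed.

Lemma lerpM u v l m : lerp u (lerp u v m) l = lerp u v (l * m).
Proof. by rewrite /lerp /=; congr pair; ring. Qed.

Lemma lerpD u v l m : lerp (lerp u v m) v l = lerp u v (m + l * (1 - m)).
Proof. by rewrite /lerp /=; congr pair; ring. Qed.

Lemma lerpC u v l : lerp u v l = lerp v u (1 - l).
Proof. by rewrite /lerp /=; congr pair; ring. Qed.

Lemma lerpxx u l : lerp u u l = u.
Proof. by case: u => a b; rewrite /lerp /= !subrr !mulr0 !addr0. Qed.

Lemma lerp_inj u v : u <> v -> injective (lerp u v).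
Proof.
case: u v => a b [c d] /= uv l m [E1 E2]; apply/eqP; apply: contraNT (introN eqP uv).
rewrite -subr_eq0 => lm0.
have /eqP : (l - m) * (c - a) = 0 by rewrite mulrBl (addrI a E1) subrr.
have /eqP : (l - m) * (d - b) = 0 by rewrite mulrBl (addrI b E2) subrr.
by rewrite !mulf_eq0 (negbTE lm0) /= !subr_eq0 => /eqP-> /eqP->.
Qed.

Lemma continuous_lerp u v : continuous (lerp u v).
Proof.
have affine (a b : R) : continuous (fun l : R => a + l * b).
  by move=> y; apply: cvgD; [exact: cvg_cst | apply: cvgMl; exact: cvg_id].
by move=> x; exact: cvg_pair (affine _ _ x) (affine _ _ x).
Qed.

Lemma segment_l u v : segment u v u.
Proof. by exists 0; rewrite ?lerp0 // lexx ler01. Qed.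

Lemma segment_r u v : segment u v v.
Proof. by exists 1; rewrite ?lerp1 // lexx ler01. Qed.

Lemma segmentxx u : segment u u = [set u].
Proof.
apply/seteqP; split=> x; first by case=> l _ ->; rewrite lerpxx.
by move=> ->; exact: segment_l.
Qed.

Lemma segmentC u v : segment u v = segment v u.
Proof.
rewrite eqEsubset; split=> w [l /andP[l0 l1] ->];
  by exists (1 - l); [apply/andP; split; lra | exact: lerpC].
Qed.

Lemma segment_subl u v z : segment u v z -> segment u z `<=` segment u v.
Proof.
move=> [m /andP[m0 m1] ->] w [l /andP[l0 l1] ->]; exists (l * m); last exact: lerpM.
by rewrite mulr_ge0 //= mulr_ile1.
Qed.

Lemma segment_subr u v z : segment u v z -> segment z v `<=` segment u v.
Proof.
move=> [m /andP[m0 m1] ->] w [l /andP[l0 l1] ->]; exists (m + l * (1 - m)); last exact: lerpD.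
have : l * (1 - m) <= 1 - m by rewrite ler_piMl // subr_ge0.
have : 0 <= l * (1 - m) by rewrite mulr_ge0 ?subr_ge0.
by move=> *; apply/andP; split; lra.
Qed.

Lemma segment_image u v : segment u v = lerp u v @` `[0, 1].
Proof.
apply/seteqP; split=> w; first by move=> [l l01 ->]; exists l => //; rewrite /= in_itv.
by move=> [l l01 <-]; exists l => //; move: l01; rewrite /= in_itv.
Qed.

Lemma segment_closed u v : closed (segment u v).
Proof.
rewrite segment_image; apply: compact_closed; first exact: norm_hausdorff.
apply: continuous_compact; last exact: segment_compact.
exact/continuous_subspaceT/continuous_lerp.
Qed.

Lemma polyline_head p s : polyline p s p.
Proof. by case: s => [|v s] /=; [|left; exact: segment_l]. Qed.

Lemma polyline_last p s : polyline p s (last p s).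
Proof. by elim: s p => [|v s IH] p //=; right; apply: IH. Qed.

Lemma polyline_cat p s1 s2 :
  polyline p (s1 ++ s2) = polyline p s1 `|` polyline (last p s1) s2.
Proof.
elim: s1 p => [|v s IH] p /=; last by rewrite IH setUA.
by apply/seteqP; split=> x; [right|case=> [->|//]; exact: polyline_head].
Qed.

Lemma polyline_rcons p s y :
  polyline p (rcons s y) = polyline p s `|` segment (last p s) y.
Proof.
rewrite -cats1 polyline_cat /=; congr (_ `|` _).
by rewrite setUidl // => x ->; exact: segment_r.
Qed.

Lemma polyline_closed p s : closed (polyline p s).
Proof.
elim: s p => [|v s IH] p /=; last by apply: closedU; [exact: segment_closed | exact: IH].
by rewrite -segmentxx; exact: segment_closed.
Qed.

Lemma simple_polyline_cat p s1 s2 :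
  simple_polyline p s1 -> simple_polyline (last p s1) s2 ->
  polyline p s1 `&` polyline (last p s1) s2 `<=` [set last p s1] ->
  simple_polyline p (s1 ++ s2).
Proof.
elim: s1 p => [//|v s IH] p /= [pv sv segv] s2S cap; split => //.
  by apply: IH => // x [x1 x2]; apply: cap; split => //; right.
rewrite polyline_cat => x [xs [xi|xl]]; first by apply: segv.
have xe : x = last v s by apply: cap; split => //; left.
by apply: segv; split => //; rewrite xe; exact: polyline_last.
Qed.

Lemma segment_first_hit K u v l0 : closed K -> 0 <= l0 <= 1 -> K (lerp u v l0) ->
  exists l, [/\ 0 <= l <= 1, K (lerp u v l) &
    forall m, 0 <= m -> m < l -> ~ K (lerp u v m)].
Proof.
move=> cK l01 Kl0.
pose A := `[(0:R), 1] `&` (lerp u v @^-1` K).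
have cA : closed A.
  apply: closedI; first exact: itv_closed.
  by move/continuous_closedP: (@continuous_lerp u v); apply.
have A0 : A l0 by split => //=; rewrite in_itv.
have lbA : has_lbound A by exists 0 => x [] /=; rewrite in_itv => /andP[].
have [] : A (inf A).
  apply: (itv_closed_infimums (ex_intro _ l0 A0) cA); split; first exact: ge_inf.
  by move=> y ly; apply: lb_le_inf => //; exists l0.
rewrite /= in_itv /= => /andP[i0 i1] Ki; exists (inf A); split; rewrite ?i0 //.
move=> m m0 mi Km; have : A m by split => //=; rewrite in_itv /= m0 (le_trans (ltW mi)).
by move/(ge_inf lbA); rewrite leNgt mi.
Qed.

Lemma segment_last_hit K u v l0 : closed K -> 0 <= l0 <= 1 -> K (lerp u v l0) ->
  exists l, [/\ 0 <= l <= 1, K (lerp u v l) &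
    forall m, m <= 1 -> l < m -> ~ K (lerp u v m)].
Proof.
move=> cK /andP[a0 a1] Kl0.
have [||l [/andP[h0 h1] Kl H]] := segment_first_hit (u := v) (v := u) (l0 := 1 - l0) cK.
- by apply/andP; split; lra.
- by rewrite -lerpC.
exists (1 - l); split; first by apply/andP; split; lra.
  by rewrite lerpC opprB addrC subrK.
by move=> m m1 lm Km; apply: (H (1 - m)); [lra | lra | rewrite -lerpC].
Qed.

Lemma simple_polyline_suffix p s z : simple_polyline p s -> polyline p s z ->
  exists s', [/\ simple_polyline z s', last z s' = last p s & polyline z s' `<=` polyline p s].
Proof.
elim: s p => [|v s IH] p /=; first by move=> _ ->; exists [::]; split => //=.
move=> [pv sv segv] [zs|zi]; last first.
  by have [s' [? ? sub]] := IH v sv zi; exists s'; split => // x /sub; right.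
have [->|zv] := eqVneq z v; first by exists s; split => // x; right.
exists (v :: s); split => //=.
- by split; [exact/eqP | done | move=> x [/(segment_subr zs) ? ?]; apply: segv].
- by move=> x [/(segment_subr zs) ?|?]; [left|right].
Qed.

Lemma simple_polyline_prefix p s z : simple_polyline p s -> polyline p s z ->
  exists s', [/\ simple_polyline p s', last p s' = z & polyline p s' `<=` polyline p s].
Proof.
elim: s p => [|v s IH] p /=; first by move=> _ ->; exists [::]; split => //=.
move=> [pv sv segv] [zs|zi]; last first.
  have [s' [h1 h2 h3]] := IH v sv zi; exists (v :: s'); split => //=.
    by split => // x [? /h3 ?]; apply: segv.
  by move=> x [?|/h3 ?]; [left|right].
have [<-|pz] := eqVneq p z.
  by exists [::]; split => // x /= ->; left; exact: segment_l.
exists [:: z]; split => //=; first by split => //; exact/eqP.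
by move=> x [/(segment_subl zs) ?|->]; left.
Qed.

(* Loop removal: cut the first edge at its first point on the (inductively
   simplified) rest of the path. *)
Lemma polyline_simplify p s : exists s',
  [/\ simple_polyline p s', last p s' = last p s & polyline p s' `<=` polyline p s].
Proof.
elim: s p => [|v s IH] p /=; first by exists [::]; split => //=.
have [s1 [h1 h2 h3]] := IH v.
have [||l [/andP[l0 l1] Kl H]] :=
  segment_first_hit (u := p) (v := v) (l0 := 1) (polyline_closed (p := v) (s := s1)).
- by rewrite ler01 lexx.
- by rewrite lerp1; exact: polyline_head.
have [s2 [g1 g2 g3]] := simple_polyline_suffix h1 Kl.
have [l0'|lpos] := eqVneq l 0.
  move: Kl g1 g2 g3; rewrite l0' lerp0 => Kl g1 g2 g3.
  by exists s2; split; rewrite ?g2 ?h2 // => x /g3 /h3; right.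
have lp : 0 < l by rewrite lt_def lpos.
have ls : segment p v (lerp p v l) by exists l; rewrite ?l0.
exists (lerp p v l :: s2); split => /=; last 2 first.
- by rewrite g2 h2.
- by move=> x [/(segment_subl ls) ?|/g3 /h3 ?]; [left|right].
split => //.
  by move=> E; apply: (H 0 (lexx _) lp); rewrite lerp0 E.
move=> x [[m /andP[m0 m1] ->] /g3 Kx]; rewrite lerpM in Kx *.
have /negP : ~ (m * l < l) by move=> ml; apply: (H (m * l)); rewrite ?mulr_ge0.
rewrite -leNgt => hl.
suff -> : m = 1 by rewrite mul1r.
by apply/eqP; rewrite eq_le m1 -(ler_pM2r lp) mul1r.
Qed.

Lemma polyline_last_entry K p s : closed K -> polyline p s `&` K !=set0 ->
  exists y s', [/\ K y, polyline y s' `<=` polyline p s,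
    polyline y s' `&` K `<=` [set y] & last y s' = last p s].
Proof.
move=> cK; elim: s p => [|v s IH] p /=.
  by move=> [x [-> Kx]]; exists p, [::]; split => // x [->].
have [[x [xi Kx]] _|nx] := pselect (polyline v s `&` K !=set0).
  have [y [s' [h1 h2 h3 h4]]] := IH v (ex_intro _ x (conj xi Kx)).
  by exists y, s'; split => // z /h2; right.
move=> [x [[[l0 l01 xE]|xi] Kx]]; last by exfalso; apply: nx; exists x.
rewrite xE in Kx; have [l [/andP[l0' l1] Kl H]] := segment_last_hit cK l01 Kx.
have l1' : l < 1.
  rewrite lt_neqAle l1 andbT; apply/eqP => E; apply: nx; exists v.
  by split; [exact: polyline_head | rewrite -(lerp1 p v) -E].
have ls : segment p v (lerp p v l) by exists l; rewrite ?l0'.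
exists (lerp p v l), (v :: s); split => //=.
  by move=> z [/(segment_subr ls) ?|?]; [left|right].
move=> z [[[m /andP[m0 m1] zE]|zi] Kz]; last by exfalso; apply: nx; exists z.
rewrite zE lerpD in Kz *; have [->|mpos] := eqVneq m 0; first by rewrite mul0r addr0.
exfalso; apply: (H (l + m * (1 - l))) => //.
  have : m * (1 - l) <= 1 - l by rewrite ler_piMl // subr_ge0 ltW.
  lra.
by rewrite ltrDl mulr_gt0 ?subr_gt0 // lt_def mpos.
Qed.

(* Follow [p :: s] up to the last point [y] where [q :: s'] enters it, then
   continue along [s'] from [y]. *)
Lemma polyline_splice p s q s' : simple_polyline p s -> last p s = q ->
  exists y s1 s2, [/\ simple_polyline p s1 /\ last p s1 = y,
    simple_polyline y s2 /\ last y s2 = last q s',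
    polyline p s1 `<=` polyline p s, polyline y s2 `<=` polyline q s'
    & polyline p s1 `&` polyline y s2 `<=` [set y]].
Proof.
move=> sim ps.
have [|y [s0 [Ky s0s s0K s0l]]] :=
  polyline_last_entry (p := q) (s := s') (polyline_closed (p := p) (s := s)).
  by exists q; split; [exact: polyline_head | rewrite -ps; exact: polyline_last].
have [s1 [h1 h2 h3]] := simple_polyline_prefix sim Ky.
have [s2 [g1 g2 g3]] := polyline_simplify y s0.
exists y, s1, s2; split; rewrite ?g2 //.
- by move=> x /g3 /s0s.
- by move=> x [/h3 x1 /g3 x2]; apply: s0K.
Qed.

End Polyline.

Section PolylineParam.
Variable R : realType.
Implicit Types (p v : R * R) (s : seq (R * R)) (t : R).

Definition clamp01 t : R := Num.min (Num.max t 0) 1.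

(* Edge [k] of the path is traversed for [t] in [k, k+1]; outside [0, 1] each
   edge contributes a constant, so the sum of the shifted edge maps telescopes. *)
Fixpoint polyline_param p s t : R * R :=
  if s is v :: s' then
    let q := polyline_param v s' (t - 1) in
    ((lerp p v (clamp01 t)).1 + (q.1 - v.1), (lerp p v (clamp01 t)).2 + (q.2 - v.2))
  else p.

Lemma clamp01_le0 t : t <= 0 -> clamp01 t = 0.
Proof. by move=> t0; rewrite /clamp01 (max_idPr t0); apply/min_idPl; rewrite ler01. Qed.

Lemma clamp01_ge1 t : 1 <= t -> clamp01 t = 1.
Proof. by move=> t1; rewrite /clamp01 (max_idPl (le_trans ler01 t1)); apply/min_idPr. Qed.

Lemma clamp01_id t : 0 <= t <= 1 -> clamp01 t = t.
Proof. by move=> /andP[t0 t1]; rewrite /clamp01 (max_idPl t0); apply/min_idPl. Qed.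

Lemma continuous_clamp01 : continuous clamp01.
Proof.
move=> x; apply: (@continuous_min _ _ (fun t => Num.max t 0) (fun _ => 1)); last exact: cvg_cst.
by apply: (@continuous_max _ _ id (fun _ => 0)); [exact: cvg_id|exact: cvg_cst].
Qed.

Lemma polyline_param_le0 p s t : t <= 0 -> polyline_param p s t = p.
Proof.
elim: s p t => [|v s IH] p t //= t0.
by rewrite clamp01_le0 // IH ?lerp0; [case: p => a b /=; congr pair; ring | lra].
Qed.

Lemma polyline_param_ge1 p v s t : 1 <= t ->
  polyline_param p (v :: s) t = polyline_param v s (t - 1).
Proof.
move=> t1 /=; rewrite clamp01_ge1 //.
by case: (polyline_param v s (t - 1)) => a b; case: v => c d /=; congr pair; ring.
Qed.

Lemma polyline_param_01 p v s t : 0 <= t <= 1 ->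
  polyline_param p (v :: s) t = lerp p v t.
Proof.
move=> /andP[t0 t1] /=; rewrite clamp01_id ?t0 ?t1 // polyline_param_le0; last by lra.
by rewrite /lerp /= !subrr !addr0.
Qed.

Lemma polyline_param_cat1 p s1 s2 t : t <= (size s1)%:R ->
  polyline_param p (s1 ++ s2) t = polyline_param p s1 t.
Proof.
elim: s1 p t => [|v s IH] p t; first by move=> t0; rewrite polyline_param_le0.
rewrite cat_cons [size _]/= -natr1 => ts; have [t0|t0] := lerP t 0.
  by rewrite !polyline_param_le0.
have [t1|t1] := lerP t 1; first by rewrite !polyline_param_01 // (ltW t0) t1.
by rewrite !polyline_param_ge1 ?ltW // IH //; lra.
Qed.

Lemma polyline_param_cat2 p s1 s2 t : (size s1)%:R <= t ->
  polyline_param p (s1 ++ s2) t = polyline_param (last p s1) s2 (t - (size s1)%:R).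
Proof.
elim: s1 p t => [|v s IH] p t; first by rewrite subr0.
rewrite cat_cons [size _]/= -natr1 => ts; have := ler0n R (size s) => s0.
by rewrite polyline_param_ge1 ?IH; [congr polyline_param; ring | lra | lra].
Qed.

Lemma polyline_param_start p s : polyline_param p s 0 = p.
Proof. exact: polyline_param_le0. Qed.

Lemma polyline_param_end p s : polyline_param p s (size s)%:R = last p s.
Proof. by rewrite -{1}(cats0 s) polyline_param_cat2 // subrr. Qed.

Lemma polyline_paramP p s t : 0 <= t <= (size s)%:R ->
  polyline p s (polyline_param p s t).
Proof.
elim: s p t => [//|v s IH] p t /andP[t0]; rewrite /= -natr1 => ts.
have [t1|t1] := lerP t 1.
  left; rewrite -/(polyline_param p (v :: s) t) polyline_param_01 ?t0 ?t1 //.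
  by exists t; rewrite ?t0.
right; rewrite -/(polyline_param p (v :: s) t) polyline_param_ge1 ?ltW //.
by apply: IH; apply/andP; split; lra.
Qed.

Lemma polyline_param_mid p s1 s2 s3 t :
  (size s1)%:R <= t <= (size s1)%:R + (size s2)%:R ->
  polyline (last p s1) s2 (polyline_param p (s1 ++ s2 ++ s3) t).
Proof.
move=> /andP[t1 t2]; rewrite polyline_param_cat2 // polyline_param_cat1; last by lra.
by apply: polyline_paramP; apply/andP; split; lra.
Qed.

Lemma continuous_polyline_param p s : continuous (polyline_param p s).
Proof.
suff [c1 c2] : continuous (fst \o polyline_param p s) /\ continuous (snd \o polyline_param p s).
  have E : (fun t => ((fst \o polyline_param p s) t, (snd \o polyline_param p s) t))
      = polyline_param p s by apply/funext => t /=; case: polyline_param.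
  by move=> x; have := cvg_pair (c1 x) (c2 x); rewrite E => /(_ _ _ _).
elim: s p => [|v s IH] p; first by split=> x; exact: cvg_cst.
have [c1 c2] := IH v.
have csh : continuous (fun t : R => t - 1).
  by move=> x; apply: cvgB; [exact: cvg_id|exact: cvg_cst].
have lin (a b : R) : continuous (fun t => a + clamp01 t * b).
  by move=> x; apply: cvgD; [exact: cvg_cst|apply: cvgMl; exact: continuous_clamp01].
split=> x /=; apply: cvgD; try exact: lin; apply: cvgB; try exact: cvg_cst.
- exact: continuous_comp (csh x) (c1 (x - 1)).
- exact: continuous_comp (csh x) (c2 (x - 1)).
Qed.

Lemma polyline_param_inj p s : simple_polyline p s -> forall t t',
  0 <= t <= (size s)%:R -> 0 <= t' <= (size s)%:R ->
  polyline_param p s t = polyline_param p s t' -> t = t'.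
Proof.
elim: s p => [|v s IH] p; first by move=> _ t t' /=; lra.
move=> [pv sv segv]; rewrite [size _]/= -natr1.
(* A point of the first edge that lies on the rest of the path must be the
   joint vertex [v], reached only at parameter 1 on both sides. *)
have cross t t' : 0 <= t <= 1 -> 1 <= t' <= (size s)%:R + 1 ->
    polyline_param p (v :: s) t = polyline_param p (v :: s) t' -> t = t'.
  move=> /andP[t0 t1] /andP[t'1 t's].
  rewrite polyline_param_01 ?t0 ?t1 // polyline_param_ge1 // => E.
  have Ev : lerp p v t = v.
    apply: segv; split; first by exists t; rewrite ?t0.
    by rewrite E; apply: polyline_paramP; apply/andP; split; lra.
  have t1' : t = 1 by apply: (lerp_inj pv); rewrite Ev lerp1.
  have : polyline_param v s (t' - 1) = polyline_param v s 0.
    by rewrite -E Ev polyline_param_start.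
  move/(IH v sv (t' - 1) 0); rewrite lexx ler0n; lra.
move=> t t' /andP[t0 ts] /andP[t'0 t's] E.
have [t1|t1] := lerP t 1; have [t'1|t'1] := lerP t' 1.
- by move: E; rewrite !polyline_param_01 ?t0 ?t1 ?t'0 ?t'1 // => /(lerp_inj pv).
- by apply: cross => //; apply/andP; split; lra.
- by apply/esym/cross => //; apply/andP; split; lra.
- move: E; rewrite !polyline_param_ge1 ?ltW // => /(IH v sv); lra.
Qed.

Lemma polyline_param_jordan p s : simple_polyline p s -> s != [::] ->
  jordan_param (fun x => polyline_param p s (x * (size s)%:R)) 0 1.
Proof.
move=> sim s0; have M0 : 0 < (size s)%:R :> R by rewrite ltr0n lt0n size_eq0.
split.
  have cM : continuous (fun y : R => y * (size s)%:R).
    by move=> y; apply: cvgMl; exact: cvg_id.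
  apply: continuous_subspaceT => x.
  exact: (continuous_comp (cM x) (@continuous_polyline_param p s (x * (size s)%:R))).
move=> x y; rewrite !in_setE /= !in_itv /= => /andP[x0 x1] /andP[y0 y1].
have scaled (z : R) : 0 <= z -> z <= 1 -> 0 <= z * (size s)%:R <= (size s)%:R.
  by move=> z0 z1; rewrite mulr_ge0 ?(ltW M0) //= ler_piMl ?(ltW M0).
move/(polyline_param_inj sim (scaled _ x0 x1) (scaled _ y0 y1)).
by apply: mulIf; rewrite gt_eqF.
Qed.

End PolylineParam.

Section PolylineReach.
Variable R : realType.
Implicit Types (p q x y z : R * R) (U : set (R * R)).

Definition reachable U q x := exists s, last q s = x /\ polyline q s `<=` U.

Lemma ball_segment y z (e : R) : ball y e z -> segment y z `<=` ball y e.
Proof.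
case: y z => y1 y2 [z1 z2] [h1 h2] _ [l /andP[l0 l1] ->]; move: h1 h2; rewrite /ball /=.
have shrink (a b : R) : `|a - b| < e -> `|a - (a + l * (b - a))| < e.
  move=> h; have -> : a - (a + l * (b - a)) = l * (a - b) by ring.
  by rewrite normrM ger0_norm //; apply: le_lt_trans h; rewrite ler_piMl.
by move=> /shrink h1 /shrink h2; split.
Qed.

Lemma open_near_segment U y : open U -> U y -> \forall z \near y, segment y z `<=` U.
Proof.
rewrite openE => oU /oU /nbhs_ballP[e e0 eU].
by apply/nbhs_ballP; exists e => // z /ball_segment yz w /yz /eU.
Qed.

Lemma reachable_sub U q x : reachable U q x -> U x.
Proof. by move=> [s [<- sU]]; apply: sU; exact: polyline_last. Qed.

Lemma reachable_rcons U q z y : reachable U q z -> segment z y `<=` U -> reachable U q y.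
Proof.
move=> [s [zs sU]] zy; exists (rcons s y); split; first by rewrite last_rcons.
by rewrite polyline_rcons zs => x [/sU|/zy].
Qed.

Lemma open_reachable U q : open U -> open (reachable U q).
Proof.
move=> oU; rewrite openE => x rx.
apply: filterS (open_near_segment oU (reachable_sub rx)) => z.
exact: reachable_rcons.
Qed.

Lemma reachable_closure U q y : open U -> U y ->
  closure (reachable U q) y -> reachable U q y.
Proof.
move=> oU Uy /(_ _ (open_near_segment oU Uy))[z [rz yz]].
by apply: reachable_rcons rz _; rewrite segmentC.
Qed.

Lemma reachable_connected U q : open U -> connected U -> U q -> reachable U q = U.
Proof.
move=> oU cU Uq; have rU : reachable U q `<=` U by move=> x /reachable_sub.
apply: cU.
- by exists q, [::]; split => // x ->.
- by exists (reachable U q); [exact: open_reachable | rewrite setIidr].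
- exists (closure (reachable U q)); first exact: closed_closure.
  rewrite eqEsubset; split=> x; first by move=> rx; split; [exact: rU | exact: subset_closure].
  by move=> [Ux cx]; exact: reachable_closure.
Qed.

End PolylineReach.

Section Pieces.
Variable R : realType.
Variables (m : nat) (pts : nat -> R * R) (P : nat -> seq (R * R)).

Definition pieces i l := flatten [seq P j | j <- iota i l].

Hypothesis last_piece : forall k, (1 <= k < m)%N -> last (pts k) (P k) = pts k.+1.

Lemma piecesS i l : pieces i l.+1 = P i ++ pieces i.+1 l.
Proof. by []. Qed.

Lemma pieces1 i : pieces i 1 = P i.
Proof. exact: cats0. Qed.

Lemma pieces_cat i l1 l2 : pieces i (l1 + l2) = pieces i l1 ++ pieces (i + l1) l2.
Proof. by rewrite /pieces iotaD map_cat flatten_cat. Qed.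

Lemma last_pieces i l : (1 <= i)%N -> (i + l <= m)%N ->
  last (pts i) (pieces i l) = pts (i + l).
Proof.
elim: l i => [|l IH] i i1 il; first by rewrite addn0.
rewrite piecesS last_cat last_piece ?IH ?addSnnS //; last by rewrite i1; lia.
Qed.

Lemma polyline_pieces i l x : (1 <= i)%N -> (i + l <= m)%N ->
  polyline (pts i) (pieces i l) x ->
  x = pts i \/ exists2 j, (i <= j < i + l)%N & polyline (pts j) (P j) x.
Proof.
elim: l i => [|l IH] i i1 il; first by left.
rewrite piecesS polyline_cat last_piece; last by rewrite i1; lia.
case=> [xi|/IH[||->|[j j_il jx]]]; rewrite ?addSnnS //.
- by right; exists i => //; lia.
- by right; exists i; [lia | rewrite -last_piece ?i1; [exact: polyline_last | lia]].
- by right; exists j => //; lia.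
Qed.

Hypothesis simple_piece : forall k, (1 <= k < m)%N -> simple_polyline (pts k) (P k).
Hypothesis piece_meet : forall k, (1 <= k)%N -> (k.+1 < m)%N ->
  polyline (pts k) (P k) `&` polyline (pts k.+1) (P k.+1) `<=` [set pts k.+1].
Hypothesis piece_far : forall k j, (1 <= k)%N -> (k.+2 <= j < m)%N ->
  polyline (pts k) (P k) `&` polyline (pts j) (P j) `<=` set0.

Lemma simple_pieces i l : (1 <= i)%N -> (i + l <= m)%N ->
  simple_polyline (pts i) (pieces i l).
Proof.
elim: l i => [//|l IH] i i1 il.
have im : (1 <= i < m)%N by rewrite i1; lia.
rewrite piecesS; apply: simple_polyline_cat; rewrite ?last_piece //.
- exact: simple_piece.
- by apply: IH; lia.
move=> x [xi /polyline_pieces[||->|[j /andP[ij jl] jx]]] //; try lia.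
case: (eqVneq j i.+1) jx => [->|jS] jx; first by apply: piece_meet; [|lia|split].
by case: (piece_far (k := i) (j := j) i1 _ (conj xi jx)) => //; lia.
Qed.

Lemma pieces_arc : (1 < m)%N -> (forall k, (1 <= k < m)%N -> P k != [::]) ->
  exists (g : R -> R * R) (t : nat -> R),
    [/\ jordan_param g 0 1, g 0 = pts 1 /\ g 1 = pts m, t 1%N = 0, t m = 1 &
        forall i, (1 <= i < m)%N ->
          [/\ t i < t i.+1, arc_image g (t i) (t i.+1) `<=` polyline (pts i) (P i)
            & g (t i) = pts i]].
Proof.
move=> m1 nz; pose S := pieces 1 m.-1; pose M : R := (size S)%:R.
have splitS i : (1 <= i < m)%N -> S = pieces 1 i.-1 ++ P i ++ pieces i.+1 (m - i.+1).
  move=> im; rewrite /S (_ : m.-1 = i.-1 + (m - i.+1).+1)%N; last by lia.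
  by rewrite pieces_cat piecesS (_ : 1 + i.-1 = i)%N //; lia.
have before i : (1 <= i <= m)%N -> last (pts 1) (pieces 1 i.-1) = pts i.
  by move=> im; rewrite last_pieces //; [congr pts|]; lia.
have sizeS i : (1 <= i < m)%N ->
    (size (pieces 1 i))%:R = (size (pieces 1 i.-1))%:R + (size (P i))%:R :> R.
  move=> im; have E : i = (i.-1 + 1)%N by lia.
  by rewrite -natrD -size_cat {1}E pieces_cat pieces1 (_ : 1 + i.-1 = i)%N //; lia.
have M0 : 0 < M.
  have := nz 1%N; rewrite m1 -size_eq0 -lt0n => /(_ isT) P1.
  by rewrite ltr0n (splitS 1%N) ?m1 // !size_cat addnCA; apply: ltn_addr.
exists (fun x => polyline_param (pts 1) S (x * M)), (fun k => (size (pieces 1 k.-1))%:R / M).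
split.
- apply: polyline_param_jordan; first by apply: simple_pieces => //; lia.
  by rewrite -size_eq0 -lt0n -(ltr0n R).
- by rewrite mul0r polyline_param_start mul1r polyline_param_end before // (ltnW m1) leqnn.
- by rewrite mul0r.
- by rewrite divff ?gt_eqF.
move=> i im; have im' : (1 <= i <= m)%N by lia.
have := sizeS i im; have := ltr0n R (size (P i)); rewrite lt0n size_eq0 nz //=.
set u := (size (pieces 1 i.-1))%:R; set v := (size (P i))%:R => v0 uv.
rewrite /= uv; split.
- by rewrite ltr_pM2r ?invr_gt0 //; lra.
- move=> z [x]; rewrite /= in_itv /= !ler_pdivrMr // !ler_pdivlMr // => /andP[ux xv] <-.
  by rewrite (splitS i im) -(before i im'); apply: polyline_param_mid; lra.
- rewrite divfK ?gt_eqF // (splitS i im) polyline_param_cat2 // subrr.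
  by rewrite polyline_param_start before.
Qed.

End Pieces.

Section Chain.
Variable R : realType.
Variables (n : nat) (a : nat -> set (R * R)).
Hypothesis n_gt1 : (1 < n)%N.
Hypothesis regular_a : forall i, (1 <= i <= n)%N -> regular_closed (a i).
Hypothesis connected_tail : forall i, (1 <= i <= n)%N -> connected ((union_from a i n)°).
Hypothesis rdot_a : forall i j, (1 <= i)%N -> (i < j)%N -> (j <= n)%N ->
  rdot (a i) (a j) = set0.
Hypothesis disjoint_a : forall i j, (1 <= i)%N -> (i < j)%N -> (j <= n)%N ->
  (1 < j - i)%N -> a i `&` a j = set0.

Definition link i := (a i `|` a i.+1)°.

Lemma far_disjoint i j x : (1 <= i)%N -> (i.+2 <= j <= n)%N -> a i x -> a j x -> False.
Proof.
move=> i1 /andP[ij jn] ai aj; have : (a i `&` a j) x by [].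
by rewrite disjoint_a //; lia.
Qed.

Lemma interior_disjoint i j x : (1 <= i)%N -> (i < j <= n)%N ->
  (a i)° x -> (a j)° x -> False.
Proof.
move=> i1 /andP[ij jn] ai aj; have : rdot (a i) (a j) x.
  by apply: subset_closure; exact: filterI.
by rewrite rdot_a.
Qed.

Lemma closed_a j : (1 <= j <= n)%N -> closed (a j).
Proof. by move=> jn; rewrite -(regular_a jn); exact: closed_closure. Qed.

Lemma closed_union_from i : (1 <= i)%N -> closed (union_from a i n).
Proof.
move=> i1; have -> : union_from a i n = \bigcup_(j in [set j | (i <= j <= n)%N]) a j.
  by rewrite eqEsubset; split=> x [j ij aj]; exists j.
apply: closed_bigcup => [|j /andP[ij jn]]; last by apply: closed_a; lia.
by apply: (sub_finite_set _ (finite_II n.+1)) => j /andP[_ jn] /=; lia.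
Qed.

Lemma link_succ_interior i x : (1 <= i)%N -> (i.+2 <= n)%N ->
  link i x -> link i.+1 x -> (a i.+1)° x.
Proof.
move=> i1 i2 Vi Vi1; apply: filterS2 Vi Vi1 => w [ai|//] [//|ai2].
by case: (far_disjoint _ _ ai ai2); lia.
Qed.

Lemma link_far_disjoint i j x : (1 <= i)%N -> (i.+2 <= j)%N -> (j < n)%N ->
  link i x -> link j x -> False.
Proof.
move=> i1 + + Vi; case: (eqVneq j i.+2) => [->|ij'] ij jn Vj.
  apply: (@interior_disjoint i.+1 i.+2 x); [lia | lia | |].
  - apply: filterS2 Vi Vj => w [ai|//] [ai2|ai3]; exfalso.
    + by apply: (far_disjoint _ _ ai ai2); lia.
    + by apply: (far_disjoint _ _ ai ai3); lia.
  - apply: filterS2 Vi Vj => w [ai|ai1] [//|ai3]; exfalso.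
    + by apply: (far_disjoint _ _ ai ai3); lia.
    + by apply: (far_disjoint _ _ ai1 ai3); lia.
case: (interior_subset Vi) (interior_subset Vj) => [ai|ai] [aj|aj];
  by apply: (far_disjoint _ _ ai aj); lia.
Qed.

Lemma union_from_link i : (1 <= i)%N -> (i < n)%N -> link i `<=` (union_from a i n)°.
Proof.
by move=> i1 iln; apply: interiorS => x [ai|ai]; [exists i | exists i.+1] => //; lia.
Qed.

(* Near a point of [a i], the sets [a j] with [j > i + 1] are absent. *)
Lemma union_from_link_near i y : (1 <= i)%N -> (i < n)%N ->
  (union_from a i n)° y -> a i y -> link i y.
Proof.
move=> i1 iln Uy ay.
have : nbhs y (~` union_from a i.+2 n).
  apply: open_nbhs_nbhs; split; first exact/closed_openC/closed_union_from.
  by move=> [j ij aj]; apply: (far_disjoint _ _ ay aj); lia.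
apply: filterS2 Uy => w [j /andP[ij jn] aj] nfar.
have [jlt|jge] := ltnP j i.+2; last by case: nfar; exists j => //; rewrite jge.
case: (eqVneq j i) aj => [-> | ji] aj; first by left.
by right; have -> : i.+1 = j by lia.
Qed.

Lemma link_last i : i.+1 = n -> link i = (union_from a i n)°.
Proof.
move=> iS; congr interior; rewrite eqEsubset; split=> x.
  by move=> [ai|ai]; [exists i | exists i.+1] => //; lia.
move=> [j ij aj]; case: (eqVneq j i) aj => [-> | ji] aj; first by left.
by right; have -> : i.+1 = j by lia.
Qed.

(* Otherwise the reachable set would be clopen in the connected
   [(union_from a i n)°], hence all of it, yet contained in [(a i)°], which
   misses the point [z] of [(a n)°]. *)
Lemma reachable_succ_interior i q z : (1 <= i < n)%N -> (a i)° q -> (a n)° z ->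
  exists2 r, (a i.+1)° r & reachable (link i) q r.
Proof.
move=> /andP[i1 iln] qi zn; apply: contrapT => noR.
pose C := reachable (link i) q.
have oC : open C by apply: open_reachable; exact: open_interior.
have Cai : C `<=` a i.
  move=> x Cx; case: (interior_subset (reachable_sub Cx)) => // ai1.
  have : closure (a i.+1)° x by rewrite regular_a //; lia.
  case/(_ C (open_nbhs_nbhs (conj oC Cx))) => r [Cr ri].
  by case: noR; exists r.
have Ci : C `<=` (a i)° by move=> x Cx; apply: filterS Cai _; exact: (oC x Cx).
have CU : C = (union_from a i n)°.
  apply: connected_tail; first by rewrite i1; lia.
  - by exists q, [::]; split => // x ->; apply: interiorS qi => w; left.
  - exists C => //; rewrite setIidr // => x /reachable_sub.
    exact: union_from_link.
  - exists (closure C); first exact: closed_closure.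
    rewrite eqEsubset; split=> x.
      move=> Cx; split; last exact: subset_closure.
      by apply: union_from_link => //; exact: reachable_sub Cx.
    move=> [Ux cx]; have ai : a i x.
      by rewrite -regular_a; [exact: closureS Ci _ cx | rewrite i1; lia].
    apply: reachable_closure cx; first exact: open_interior.
    exact: union_from_link_near.
have : C z by rewrite CU; apply: interiorS zn => x an; exists n => //; lia.
by move/Ci => zi; apply: interior_disjoint zi zn; lia.
Qed.

Lemma reachable_last i q x : i.+1 = n -> link i q -> link i x -> reachable (link i) q x.
Proof.
move=> iS qi xi; rewrite reachable_connected //; first exact: open_interior.
by rewrite link_last //; apply: connected_tail; lia.
Qed.

Variables p1 pn : R * R.
Hypothesis p1_in : (a 1%N)° p1.
Hypothesis pn_in : (a n)° pn.

Lemma next_target i q : (1 <= i < n)%N -> (a i)° q ->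
  exists2 r, (a i.+1)° r & reachable (link i) q r /\ (i.+1 = n -> r = pn).
Proof.
move=> iln qi; have qV : link i q by apply: interiorS qi => w; left.
have [iS|iS] := eqVneq i.+1 n.
  exists pn; first by rewrite iS.
  split=> //; apply: reachable_last => //.
  by apply: interiorS pn_in => w; rewrite -iS; right.
have [r ri rr] := reachable_succ_interior iln qi pn_in.
by exists r => //; split => // /eqP; rewrite (negPf iS).
Qed.

(* The first [m] pieces of the arc under construction and its free end [pts m.+1]. *)
Definition chain m (pts : nat -> R * R) (P : nat -> seq (R * R)) : Prop :=
  [/\ pts 1%N = p1,
      forall k, (1 <= k <= m)%N ->
        [/\ last (pts k) (P k) = pts k.+1, P k != [::],
            simple_polyline (pts k) (P k), polyline (pts k) (P k) `<=` link k
          & (a k)° (pts k)],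
      forall k, (1 <= k)%N -> (k < m)%N ->
        polyline (pts k) (P k) `&` polyline (pts k.+1) (P k.+1) `<=` [set pts k.+1]
    & (a m.+1)° (pts m.+1)].

Lemma chain1 r : (a 2)° r -> reachable (link 1) p1 r ->
  exists pts P, chain 1 pts P /\ pts 2%N = r.
Proof.
move=> r2 [s [sr sV]]; have [s' [sim s'r s's]] := polyline_simplify p1 s.
exists (fun k => if k == 2%N then r else p1), (fun _ => s'); split => //; split => //.
- move=> k /andP[k1 k2]; have -> : k = 1%N by lia.
  split => //=; first by rewrite s'r.
  + apply/eqP => s0; move: s'r; rewrite s0 sr /= => p1r.
    by apply: (interior_disjoint (j := 2) _ _ p1_in); [lia | lia | rewrite p1r].
  + by move=> x /s's /sV.
- by move=> k k1 k0; lia.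
Qed.

Lemma chainS m pts P r : (1 <= m)%N -> (m.+2 <= n)%N -> chain m pts P ->
  (a m.+2)° r -> reachable (link m.+1) (pts m.+1) r ->
  exists pts' P', chain m.+1 pts' P' /\ pts' m.+2 = r.
Proof.
move=> m1 mn [pts1 piece meet _] r2 [s [sr sV]].
have [|lm _ simm Vm am] := piece m; first by rewrite m1 leqnn.
have [y [s1 [s2 [[sim1 l1] [sim2 l2] s1P s2s meet12]]]] :=
  polyline_splice s simm lm.
have ay : (a m.+1)° y.
  apply: link_succ_interior => //.
    by apply/Vm/s1P; rewrite -l1; exact: polyline_last.
  by apply/sV/s2s; exact: polyline_head.
pose pts' k := if (k <= m)%N then pts k else if k == m.+1 then y else r.
pose P' k := if (k < m)%N then P k else if k == m then s1 else s2.
have pts'E k : (k <= m)%N -> pts' k = pts k by rewrite /pts' => ->.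
have pts'1 : pts' m.+1 = y by rewrite /pts' ltnn eqxx.
have pts'2 : pts' m.+2 = r by rewrite /pts' !ifF //; lia.
have P'E k : (k < m)%N -> P' k = P k by rewrite /P' => ->.
have P'0 : P' m = s1 by rewrite /P' ltnn eqxx.
have P'1 : P' m.+1 = s2 by rewrite /P' !ifF //; lia.
exists pts', P'; split => //; split; rewrite ?pts'2 ?pts'E //.
- move=> k /andP[k1]; rewrite leq_eqVlt => /orP[/eqP-> | ].
    rewrite pts'1 pts'2 P'1; split => //; first by rewrite l2.
    + apply/eqP => s0; move: l2; rewrite s0 sr /= => yr.
      by apply: (interior_disjoint (j := m.+2) _ _ ay); [lia | lia | rewrite yr].
    + by move=> x /s2s /sV.
  rewrite ltnS leq_eqVlt => /orP[/eqP-> | km].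
    rewrite P'0 pts'1 pts'E //; split => //.
    + apply/eqP => s0; move: l1; rewrite s0 /= => my.
      by apply: (interior_disjoint (j := m.+1) _ _ am); [lia | lia | rewrite my].
    + by move=> x /s1P /Vm.
  by rewrite P'E // !pts'E ?(ltnW km) //; apply: piece; lia.
- move=> k k1; rewrite ltnS leq_eqVlt => /orP[/eqP km | km].
    by rewrite km P'0 P'1 pts'1 pts'E.
  have kl : (k <= m)%N by exact: ltnW.
  rewrite P'E // !pts'E //; case: (eqVneq k.+1 m) => [km1 | km1].
    by subst m; rewrite P'0 => x [xk /s1P xm]; apply: (meet k k1 km); split.
  by rewrite P'E; [apply: meet | lia].
Qed.

Lemma chain_exists m : (1 <= m < n)%N ->
  exists pts P, chain m pts P /\ (m.+1 = n -> pts n = pn).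
Proof.
elim: m => [//|m IH] /andP[_ mn]; have [m0|m0] := posnP m.
  subst m; have [|r r2 [rr rn]] := next_target (i := 1) _ p1_in; first lia.
  have [pts [P [ch p2]]] := chain1 r2 rr.
  by exists pts, P; split => // n2; rewrite -n2 p2 rn.
have [|pts [P [ch _]]] := IH; first lia.
have [_ _ _ am] := ch.
have [|r r2 [rr rn]] := next_target (i := m.+1) _ am; first lia.
have [pts' [P' [ch' p2]]] := chainS m0 mn ch r2 rr.
by exists pts', P'; split => // n2; rewrite -n2 p2 rn.
Qed.

Lemma chain_arc pts P : chain n.-1 pts P -> pts n = pn ->
  exists (g : R -> R * R) (t : nat -> R),
    [/\ jordan_param g 0 1, g 0 = p1 /\ g 1 = pn, t 1%N = 0, t n = 1 &
        forall i, (1 <= i < n)%N ->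
          [/\ t i < t i.+1, arc_image g (t i) (t i.+1) `<=` link i
            & (a i)° (g (t i))]].
Proof.
move=> [pts1 piece meet _] ptsn.
have kN k : (1 <= k < n)%N -> (1 <= k <= n.-1)%N by lia.
have [|||||g [t [jg [g0 g1] t1 tn ht]]] :=
  pieces_arc (m := n) (pts := pts) (P := P) _ _ _ _ n_gt1.
- by move=> k /kN/piece[].
- by move=> k /kN/piece[].
- by move=> k k1 kn; apply: meet; lia.
- move=> k j k1 /andP[kj jn] x [xk xj].
  have /kN/piece[_ _ _ Vk _] : (1 <= k < n)%N by lia.
  have /kN/piece[_ _ _ Vj _] : (1 <= j < n)%N by lia.
  exact: link_far_disjoint k1 kj jn (Vk x xk) (Vj x xj).
- by move=> k /kN/piece[].
exists g, t; split => //; first by rewrite g0 g1 pts1 ptsn.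
move=> i im; have [ti gi git] := ht i im; have /kN/piece[_ _ _ Vi ai] := im.
by split; rewrite ?git // => x /gi /Vi.
Qed.

End Chain.

Unset Implicit Arguments.

Theorem lemma5p3 (R : realType) (n : nat) (a : nat -> set (R * R)) :
  (1 < n)%N ->
  (forall i, (1 <= i <= n)%N -> regular_closed (a i)) ->
  (forall i, (1 <= i <= n)%N -> connected ((union_from a i n)°)) ->
  (forall i j, (1 <= i)%N -> (i < j)%N -> (j <= n)%N -> rdot (a i) (a j) = set0) ->
  (forall i j, (1 <= i)%N -> (i < j)%N -> (j <= n)%N -> (1 < j - i)%N ->
     a i `&` a j = set0) ->
  forall p1 pn : R * R, (a 1%N)° p1 -> (a n)° pn ->
  exists (g : R -> R * R) (t : nat -> R),
    [/\ jordan_param g 0 1, g 0 = p1 /\ g 1 = pn,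
        t 1%N = 0, t n = 1 &
        forall i, (1 <= i < n)%N ->
          [/\ t i < t i.+1,
              arc_image g (t i) (t i.+1) `<=` (a i `|` a i.+1)°
            & (a i)° (g (t i))]].
Proof.
move=> n1 reg con dot dis p1 pn p1_in pn_in.
have [|pts [P [ch ptsn]]] := chain_exists n1 reg con dot dis p1_in pn_in (m := n.-1).
  lia.
by apply: (chain_arc n1 dot dis ch); apply: ptsn; lia.
Qed.
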